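(* Let $\mathbf{P}$ be a poset that has an interval representation in which every interval has length in $[1,2]$ (i.e. $\mathbf{P}\in C(2)$). Then $\dim(\mathbf{P})\le 4$.
   Context: An interval representation of a poset $(X,P)$ assigns to each $x\in X$ a closed real interval $[l_x,r_x]$ such that $x<y$ in $P$ iff $r_x<l_y$; the length is $r_x-l_x$. $C(\alpha)$ denotes the class of posets having an interval representation with all lengths in $[1,\alpha]$. The dimension $\dim(\mathbf{P})$ is the minimum number of linear extensions of $P$ whose intersection is $P$. *)

From Stdlib Require Import Reals.
From mathcomp Require Import all_boot.

Set Implicit Arguments.
Unset Strict Implicit.
Unset Printing Implicit Defensive.

Definition strict_partial_order (X : Type) (lt : X -> X -> Prop) : Prop :=
  (forall x, ~ lt x x) /\ (forall x y z, lt x y -> lt y z -> lt x z).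

Definition interval_representation (X : Type) (lt : X -> X -> Prop)
    (l r : X -> R) : Prop :=
  (forall x, Rle (l x) (r x)) /\ (forall x y, lt x y <-> Rlt (r x) (l y)).

Definition in_C (alpha : R) (X : Type) (lt : X -> X -> Prop) : Prop :=
  exists l r : X -> R, interval_representation lt l r /\
    (forall x, Rle 1 (Rminus (r x) (l x)) /\ Rle (Rminus (r x) (l x)) alpha).

Definition linear_extension (X : Type) (lt L : X -> X -> Prop) : Prop :=
  strict_partial_order L /\
  (forall x y, x <> y -> L x y \/ L y x) /\
  (forall x y, lt x y -> L x y).

Definition dim_le (X : Type) (lt : X -> X -> Prop) (d : nat) : Prop :=
  exists (k : nat) (L : 'I_k -> X -> X -> Prop),
    (k <= d)%N /\
    (forall i, linear_extension lt (L i)) /\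
    (forall x y, lt x y <-> forall i, L i x y).

From Stdlib Require Import Reals Lra Lia ZArith Classical.
From mathcomp Require Import all_boot.

Set Implicit Arguments.
Unset Strict Implicit.
Unset Printing Implicit Defensive.

Local Open Scope R_scope.

(* Cut the line into unit blocks by the integer part of the left endpoints.
   Choosing one point of each interval (say, its left or its right endpoint)
   and sorting by these points always gives a linear extension.  The first
   extension sorts by block and, inside a block, by decreasing left endpoint;
   for each residue c mod 3 a further extension uses the right endpoint of the
   elements whose block is c mod 3 and the left endpoint of all others.  As
   lengths lie in [1, 2], overlapping intervals of x and y with block x <
   block y satisfy block y - block x in {1, 2}, so the extension for the
   residue of block x puts y before x.  Pairs within one block are reversed
   by the tie breaks: decreasing left endpoint, then an enumeration of X taken
   in opposite directions in the first and in the residue extensions. *)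

Definition strict_total_order (X : Type) (t : X -> X -> Prop) : Prop :=
  strict_partial_order t /\ (forall x y, x <> y -> t x y \/ t y x).

Section Lexicographic.
Variable X : Type.

Definition lexico (f : X -> R) (t : X -> X -> Prop) (x y : X) : Prop :=
  f x < f y \/ (f x = f y /\ t x y).

Lemma lexico_strict_total_order f t :
  strict_total_order t -> strict_total_order (lexico f t).
Proof.
move=> [[t_irr t_trans] t_total]; split; first split.
- by move=> x [?|[_ /t_irr]] //; lra.
- move=> x y z [xy|[exy txy]] [yz|[eyz tyz]].
  all: try by left; lra.
  by right; split; [lra | exact: t_trans tyz].
- move=> x y nxy; rewrite /lexico.
  case: (total_order_T (f x) (f y)) => [[xy|exy]|yx]; [by left; left | | by right; left].
  by case: (t_total x y nxy) => ?; [left | right]; right.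
Qed.

Lemma strict_total_order_flip (t : X -> X -> Prop) :
  strict_total_order t -> strict_total_order (fun x y => t y x).
Proof.
move=> [[t_irr t_trans] t_total]; split; first split => //.
- by move=> x y z txy tyz; exact: t_trans tyz txy.
- by move=> x y /t_total [?|?]; [right | left].
Qed.

Lemma strict_partial_order_asym (t : X -> X -> Prop) x y :
  strict_partial_order t -> t x y -> ~ t y x.
Proof. by move=> [t_irr t_trans] txy /(t_trans _ _ _ txy) /t_irr. Qed.

Lemma lexico_linear_extension (lt : X -> X -> Prop) f t :
  (forall x y, lt x y -> f x < f y) -> strict_total_order t ->
  linear_extension lt (lexico f t).
Proof.
move=> f_mono /(lexico_strict_total_order f) [lex_spo lex_total].
by split=> //; split=> // x y /f_mono; left.
Qed.

End Lexicographic.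

Definition rank_lt {X : finType} (x y : X) : Prop :=
  (enum_rank x < enum_rank y)%N.

Lemma rank_lt_strict_total_order (X : finType) :
  strict_total_order (@rank_lt X).
Proof.
rewrite /rank_lt; split; first split.
- by move=> x; rewrite ltnn.
- by move=> x y z; apply: ltn_trans.
- move=> x y nxy; case: ltngtP; [by left | by right |].
  by move/val_inj/enum_rank_inj.
Qed.

Section IntervalExtensions.
Variables (X : finType) (l r : X -> R).
Hypothesis length_bounds : forall x, 1 <= r x - l x <= 2.

Definition block (z : X) : Z := Int_part (l z).

Definition residue_key (c : Z) (z : X) : R :=
  if Z.eqb (block z mod 3) c then r z else l z.

Definition tie_break (t : X -> X -> Prop) : X -> X -> Prop :=
  lexico (fun z => - l z) t.

Definition ext (i : nat) : X -> X -> Prop :=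
  if i is k.+1 then
    lexico (residue_key (Z.of_nat k)) (tie_break (fun x y => rank_lt y x))
  else lexico (fun z => IZR (block z)) (tie_break rank_lt).

Lemma block_bounds z : IZR (block z) <= l z < IZR (block z) + 1.
Proof. by have := base_Int_part (l z); rewrite /block; lra. Qed.

Lemma block_lt_of_sep x y : r x < l y -> (block x < block y)%Z.
Proof.
move=> rxly; apply: lt_IZR.
by have := block_bounds x; have := block_bounds y; have := length_bounds x; lra.
Qed.

Lemma block_lt_add3 x y : l y <= r x -> (block y < block x + 3)%Z.
Proof.
move=> lyrx; apply: lt_IZR; rewrite plus_IZR.
by have := block_bounds x; have := block_bounds y; have := length_bounds x; lra.
Qed.

Lemma residue_key_bounds c z : l z <= residue_key c z <= r z.
Proof. by have := length_bounds z; rewrite /residue_key; case: Z.eqb; lra. Qed.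

Lemma residue_keyE c z (eq_c : (block z mod 3 = c)%Z) : residue_key c z = r z.
Proof. by rewrite /residue_key eq_c Z.eqb_refl. Qed.

Lemma residue_keyNE c z (neq_c : (block z mod 3 <> c)%Z) :
  residue_key c z = l z.
Proof. by rewrite /residue_key; move/Z.eqb_neq: neq_c => ->. Qed.

Lemma tie_break_strict_total_order t :
  strict_total_order t -> strict_total_order (tie_break t).
Proof. exact: lexico_strict_total_order. Qed.

Lemma ext_linear_extension (lt : X -> X -> Prop) (i : nat) :
  (forall x y, lt x y -> r x < l y) -> linear_extension lt (ext i).
Proof.
move=> lt_sep; case: i => [|k] /=; apply: lexico_linear_extension.
- by move=> x y /lt_sep /block_lt_of_sep /IZR_lt.
- exact/tie_break_strict_total_order/rank_lt_strict_total_order.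
- move=> x y /lt_sep.
  by have := residue_key_bounds (Z.of_nat k) x;
     have := residue_key_bounds (Z.of_nat k) y; lra.
- exact/tie_break_strict_total_order/strict_total_order_flip/
    rank_lt_strict_total_order.
Qed.

Lemma ext_residue (c : Z) : (0 <= c < 3)%Z ->
  exists i : 'I_4, ext i =
    lexico (residue_key c) (tie_break (fun x y => rank_lt y x)).
Proof.
move=> c_bounds; exists (inord (Z.to_nat c).+1).
have c_lt3 : (Z.to_nat c < 3)%N by apply/ltP; lia.
by rewrite inordK //= Z2Nat.id //; case: c_bounds.
Qed.

Lemma ext_reverse_same_block x y :
  x <> y -> block x = block y -> exists i : 'I_4, ext i y x.
Proof.
move=> nxy same_block.
set c := ((block x + 1) mod 3)%Z.
have c_bounds : (0 <= c < 3)%Z by apply: Z.mod_pos_bound.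
have c_other z : block z = block x -> (block z mod 3 <> c)%Z.
  by move=> ->; rewrite /c; Z.div_mod_to_equations; lia.
have [i ext_i] := ext_residue c_bounds.
have key_y := residue_keyNE (c_other y (esym same_block)).
have key_x := residue_keyNE (c_other x erefl).
case: (total_order_T (l x) (l y)) => [[lxy|exy]|lyx].
- by exists ord0; right; split; [rewrite same_block | left; lra].
- have [rxy|ryx] := proj2 (rank_lt_strict_total_order X) x y nxy.
  + exists i; rewrite ext_i; right; rewrite key_x key_y.
    by split; [|right; split]; [lra | lra |].
  + by exists ord0; right; split; [rewrite same_block | right; split; [lra|]].
- by exists i; rewrite ext_i; left; rewrite key_x key_y.
Qed.

Lemma ext_reverse_higher_block x y :
  (block x < block y)%Z -> l y <= r x -> exists i : 'I_4, ext i y x.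
Proof.
move=> lt_block lyrx.
set c := (block x mod 3)%Z.
have c_bounds : (0 <= c < 3)%Z by apply: Z.mod_pos_bound.
have key_x : residue_key c x = r x by apply: residue_keyE.
have key_y : residue_key c y = l y.
  apply: residue_keyNE; have := block_lt_add3 lyrx.
  by rewrite /c; Z.div_mod_to_equations; lia.
have lxy : l x < l y.
  have : IZR (block x) + 1 <= IZR (block y) by rewrite -plus_IZR; apply: IZR_le; lia.
  by have := block_bounds x; have := block_bounds y; lra.
have [i ext_i] := ext_residue c_bounds.
exists i; rewrite ext_i /lexico /tie_break key_x key_y.
by case: (Rle_lt_or_eq_dec _ _ lyrx) => [?|?]; [left | right; split; [|left; lra]].
Qed.

Lemma ext_reverse x y :
  x <> y -> l y <= r x -> exists i : 'I_4, ext i y x.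
Proof.
move=> nxy lyrx.
case: (Z.lt_trichotomy (block y) (block x)) => [lt_block|[eq_block|lt_block]].
- by exists ord0; left; apply: IZR_lt.
- exact: ext_reverse_same_block.
- exact: ext_reverse_higher_block.
Qed.

End IntervalExtensions.

Theorem theorem7p2 (X : finType) (lt : X -> X -> Prop) :
  strict_partial_order lt -> in_C (IZR 2) lt -> dim_le lt 4.
Proof.
move=> _ [l [r [[_ rep] lengths]]].
have lt_sep x y : lt x y -> r x < l y by move/rep.
have ext_lin i := @ext_linear_extension X l r lengths lt i lt_sep.
exists 4%N, (fun i : 'I_4 => ext l r i); split=> //; split=> // x y; split.
- by move=> xy i; have [_ [_ ext_ext]] := ext_lin i; exact: ext_ext.
- move=> all_xy; apply: NNPP => nxy.
  have ext_spo i := proj1 (ext_lin i).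
  case: (classic (x = y)) => [exy|neq_xy].
    by subst y; have [ext_irr _] := ext_spo 0%N; exact: ext_irr (all_xy ord0).
  have lyrx : l y <= r x by apply: Rnot_lt_le => /rep.
  have [i yx] := ext_reverse lengths neq_xy lyrx.
  exact: strict_partial_order_asym (ext_spo i) (all_xy i) yx.
Qed.
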